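(* Let $\Gamma\le N-1$. Consider the three problems: (P$_\Gamma$) $\displaystyle\min_{\bm w\in\widehat{\mathcal V},\,\bm y\in\mathbb R^{N-1}}\bm w^\top\bar{\bm g}$ s.t. $w_i-(\bm c_{[N-1]})_i\in[-y_i\underline v_i,\,y_i\bar v_i]$ ($i\in[N-1]$), $0\le y_i\le1$, $\bm e^\top\bm y=\Gamma$; (L$_\Gamma$) $\displaystyle\max\ I_2(\bm\eta,\bm\theta)+I_1(\underline{\bm\lambda},\bar{\bm\lambda},\Gamma)$ over $(\underline{\bm\lambda},\bar{\bm\lambda},\beta,\bm\eta,\bm\theta)$ satisfying $\bar{\bm g}-\underline{\bm\lambda}+\bar{\bm\lambda}+\beta\bm e-\bm\eta+\sum_{m=1}^M\theta_mh_m\bm\Delta^m=\bm 0$, $\underline{\bm\lambda},\bar{\bm\lambda},\bm\eta,\bm\theta\ge0$, where $I_2(\bm\eta,\bm\theta):=\bm c_{[N-1]}^\top\bar{\bm g}-\bm\eta^\top\bm c_{[N-1]}+\sum_{m=1}^M\theta_mh_m\bm c_{[N-1]}^\top\bm\Delta^m$ and $I_1(\underline{\bm\lambda},\bar{\bm\lambda},\Gamma):=\min\{\sum_{i=1}^{N-1}y_i(-(\underline\lambda_i\underline v_i+\bar\lambda_i\bar v_i)):0\le y_i\le1,\ \bm e^\top\bm y=\Gamma\}$; (D$_\Gamma$) $\displaystyle\max\ \bm c_{[N-1]}^\top\bar{\bm g}-\bm\eta^\top\bm c_{[N-1]}-\sum_{i=1}^{N-1}\tau_i-\tau_0\Gamma+\sum_{m=1}^M\theta_mh_m\bm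 c_{[N-1]}^\top\bm\Delta^m$ over $\underline{\bm\lambda},\bar{\bm\lambda},\bm\eta,\bm\tau\in\mathbb R^{N-1}$, $\beta,\tau_0\in\mathbb R$, $\bm\theta\in\mathbb R^M$ subject to $\bar{\bm g}-\underline{\bm\lambda}+\bar{\bm\lambda}+\beta\bm e-\bm\eta+\sum_{m=1}^M\theta_mh_m\bm\Delta^m=\bm 0$, $-\underline\lambda_i\underline v_i-\bar\lambda_i\bar v_i+\tau_i+\tau_0\ge0$ ($i\in[N-1]$), $\underline{\bm\lambda},\bar{\bm\lambda},\bm\eta,\bm\theta,\bm\tau\ge0$. Then (P$_\Gamma$) and (L$_\Gamma$) can both be reformulated as (D$_\Gamma$): their optimal values coincide with the optimal value of (D$_\Gamma$).
   Context: Let $N\ge3$ be an integer and $\underline x=x_1<x_2<\cdots<x_N=\bar x$ real numbers; $\bm e$ denotes the all-ones vector of the appropriate dimension. Define $\bm g:[\underline x,\bar x]\to\mathbb R^{N-1}$ by $\bm g(x_1)=\bm 0$ and, for $x\in(x_i,x_{i+1}]$ ($i\in\{1,\dots,N-1\}$), $\bm g(x)=(1,\dots,1,\frac{x-x_i}{x_{i+1}-x_i},0,\dots,0)$ with the first $i-1$ entries equal to $1$, the $i$-th entry $\frac{x-x_i}{x_{i+1}-x_i}$ and the last $N-1-i$ entries $0$. For $\bm v\in\mathbb R^{N-2}$ let $\bm R\bm v:=(v_1,\dots,v_{N-2},1-\bm e^\top\bm v)\in\mathbb R^{N-1}$. Let $\bm z\in\mathbb R^n$ and $\bm\xi^1,\dots,\bm\xi^K\in\mathbb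 R^n$ with $\bm z^\top\bm\xi^k\in[\underline x,\bar x]$ (the distribution of $\bm\xi$ puts mass $1/K$ on each $\bm\xi^k$), and $\bar{\bm g}:=\frac1K\sum_{k=1}^K\bm g(\bm z^\top\bm\xi^k)$. Let $M\ge1$ and, for $m=1,\dots,M$, let $r_1^m\le r_3^m$ and $r_2^m$ lie in $[\underline x,\bar x]$, $p^m\in[0,1]$, $h_m\in\{-1,1\}$, and $\bm\Delta^m:=(1-p^m)\bm g(r_1^m)+p^m\bm g(r_3^m)-\bm g(r_2^m)$. Let $\mathcal V:=\{\bm v\in\mathbb R^{N-2}:\bm v\ge0,\ \bm e^\top\bm v\le1,\ h_m(\bm R\bm v)^\top\bm\Delta^m\le0,\ m\in[M]\}$, assumed to have nonempty interior, let $\bm c\in\mathbb R^{N-2}$ be its analytic center (maximizer over the interior of the sum of the logarithms of the slacks of the defining inequalities) and $\bm c_{[N-1]}:=\bm R\bm c$ (so $\bm e^\top\bm c_{[N-1]}=1$). For $i\in[N-1]$ let $\underline v_i:=-\min\{(\bm R\bm v)_i-(\bm c_{[N-1]})_i:\bm v\in\mathcal V\}$ and $\bar v_i:=\max\{(\bm R\bm v)_i-(\bm c_{[N-1]})_i:\bm v\in\mathcal V\}$. Let $\widehat{\mathcal V}:=\{\bm w\in\mathbb R^{N-1}_+:\bm e^\top\bm w=1,\ h_m\bm w^\top\bm\Delta^m\le0,\ m\in[M]\}$. Optimal values are understood in the extended reals. *)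

From HB Require Import structures.
From mathcomp Require Import all_boot all_order all_algebra.
From mathcomp Require Import all_classical all_reals all_analysis.
Set Implicit Arguments.
Unset Strict Implicit.
Unset Printing Implicit Defensive.
Import Order.TTheory GRing.Theory Num.Theory.
Local Open Scope ring_scope.
Local Open Scope classical_set_scope.

Section Defs.
Variable R : realType.

Definition dot (k : nat) (u v : 'I_k -> R) : R := \sum_(i < k) u i * v i.

(* Breakpoints are
   0-indexed: xs 0 < xs 1 < ... < xs N.-1.  Entry j (0-indexed) of g x is
   1 if x >= xs (j+1), 0 if x <= xs j, and (x - xs j)/(xs (j+1) - xs j) otherwise;
   this is exactly the paper's g on (x_i, x_{i+1}] and g(x_1) = 0. *)
Definition gfun (N : nat) (xs : nat -> R) (x : R) : 'I_N.-1 -> R :=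
  fun j => if x <= xs j then 0
           else if xs j.+1 <= x then 1
           else (x - xs j) / (xs j.+1 - xs j).

(* R v := (v_1, ..., v_{N-2}, 1 - e^T v) *)
Definition Rmap (N : nat) (v : 'I_N.-2 -> R) : 'I_N.-1 -> R :=
  fun j => oapp v (1 - \sum_(k < N.-2) v k) (insub (nat_of_ord j) : option 'I_N.-2).

Definition Delta (N : nat) (xs : nat -> R) (p r1 r2 r3 : R) : 'I_N.-1 -> R :=
  fun j => (1 - p) * @gfun N xs r1 j + p * @gfun N xs r3 j - @gfun N xs r2 j.

Definition Vset (N M : nat) (h : 'I_M -> R) (Dl : 'I_M -> 'I_N.-1 -> R)
  : set ('I_N.-2 -> R) :=
  [set v | (forall i, 0 <= v i) /\ \sum_(i < N.-2) v i <= 1 /\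
           (forall m, h m * dot (Rmap v) (Dl m) <= 0)].

Definition Vhat (N M : nat) (h : 'I_M -> R) (Dl : 'I_M -> 'I_N.-1 -> R)
  : set ('I_N.-1 -> R) :=
  [set w | (forall i, 0 <= w i) /\ \sum_(i < N.-1) w i = 1 /\
           (forall m, h m * dot w (Dl m) <= 0)].

(* v is an interior point of S (interior in R^k w.r.t. the sup norm,
   equivalently any norm) *)
Definition interior_pt (k : nat) (S : set ('I_k -> R)) (v : 'I_k -> R) : Prop :=
  exists2 e : R, 0 < e & forall u, (forall i, `|u i - v i| < e) -> S u.

Definition logbarrier (N M : nat) (h : 'I_M -> R) (Dl : 'I_M -> 'I_N.-1 -> R)
  (v : 'I_N.-2 -> R) : R :=
  \sum_(i < N.-2) ln (v i) + ln (1 - \sum_(i < N.-2) v i)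
  + \sum_(m < M) ln (- (h m * dot (Rmap v) (Dl m))).

Definition analytic_center (N M : nat) (h : 'I_M -> R) (Dl : 'I_M -> 'I_N.-1 -> R)
  (c : 'I_N.-2 -> R) : Prop :=
  interior_pt (Vset h Dl) c /\
  forall v, interior_pt (Vset h Dl) v -> logbarrier h Dl v <= logbarrier h Dl c.

Definition vlow (N M : nat) (h : 'I_M -> R) (Dl : 'I_M -> 'I_N.-1 -> R)
  (cR : 'I_N.-1 -> R) (i : 'I_N.-1) : R :=
  - inf [set Rmap v i - cR i | v in Vset h Dl].

Definition vup (N M : nat) (h : 'I_M -> R) (Dl : 'I_M -> 'I_N.-1 -> R)
  (cR : 'I_N.-1 -> R) (i : 'I_N.-1) : R :=
  sup [set Rmap v i - cR i | v in Vset h Dl].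

Definition budget (k : nat) (Gamma : R) (y : 'I_k -> R) : Prop :=
  (forall i, 0 <= y i <= 1) /\ \sum_(i < k) y i = Gamma.

Definition val_P (N M : nat) (h : 'I_M -> R) (Dl : 'I_M -> 'I_N.-1 -> R)
  (gbar cR vl vu : 'I_N.-1 -> R) (Gamma : R) : \bar R :=
  ereal_inf [set r | exists (w y : 'I_N.-1 -> R),
    [/\ Vhat h Dl w,
        (forall i, - (y i * vl i) <= w i - cR i <= y i * vu i),
        budget Gamma y &
        r = (dot w gbar)%:E]].

Definition I1 (k : nat) (lamL lamU vl vu : 'I_k -> R) (Gamma : R) : \bar R :=
  ereal_inf [set (\sum_(i < k) y i * (- (lamL i * vl i + lamU i * vu i)))%:E
            | y in budget Gamma].

Definition I2 (N M : nat) (h : 'I_M -> R) (Dl : 'I_M -> 'I_N.-1 -> R)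
  (gbar cR : 'I_N.-1 -> R) (eta : 'I_N.-1 -> R) (theta : 'I_M -> R) : R :=
  dot cR gbar - dot eta cR + \sum_(m < M) theta m * h m * dot cR (Dl m).

Definition eq_constr (N M : nat) (h : 'I_M -> R) (Dl : 'I_M -> 'I_N.-1 -> R)
  (gbar lamL lamU : 'I_N.-1 -> R) (beta : R) (eta : 'I_N.-1 -> R)
  (theta : 'I_M -> R) : Prop :=
  forall i, gbar i - lamL i + lamU i + beta - eta i
            + \sum_(m < M) theta m * h m * Dl m i = 0.

Definition val_L (N M : nat) (h : 'I_M -> R) (Dl : 'I_M -> 'I_N.-1 -> R)
  (gbar cR vl vu : 'I_N.-1 -> R) (Gamma : R) : \bar R :=
  ereal_sup [set r | exists (lamL lamU : 'I_N.-1 -> R) (beta : R)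
                            (eta : 'I_N.-1 -> R) (theta : 'I_M -> R),
    [/\ eq_constr h Dl gbar lamL lamU beta eta theta,
        (forall i, 0 <= lamL i) /\ (forall i, 0 <= lamU i),
        (forall i, 0 <= eta i) /\ (forall m, 0 <= theta m) &
        r = ((I2 h Dl gbar cR eta theta)%:E + I1 lamL lamU vl vu Gamma)%E]].

Definition val_D (N M : nat) (h : 'I_M -> R) (Dl : 'I_M -> 'I_N.-1 -> R)
  (gbar cR vl vu : 'I_N.-1 -> R) (Gamma : R) : \bar R :=
  ereal_sup [set r | exists (lamL lamU eta tau : 'I_N.-1 -> R) (beta tau0 : R)
                            (theta : 'I_M -> R),
    [/\ eq_constr h Dl gbar lamL lamU beta eta theta,
        (forall i, - (lamL i * vl i) - lamU i * vu i + tau i + tau0 >= 0),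
        (forall i, 0 <= lamL i) /\ (forall i, 0 <= lamU i),
        (forall i, 0 <= eta i) /\ (forall m, 0 <= theta m) /\ (forall i, 0 <= tau i) &
        r = (dot cR gbar - dot eta cR - \sum_(i < N.-1) tau i - tau0 * Gamma
             + \sum_(m < M) theta m * h m * dot cR (Dl m))%:E]].

End Defs.

(* (P_Gamma) is a linear program in (w, y) and (D_Gamma) is exactly its
   Lagrangian dual; likewise the inner minimum I_1 of (L_Gamma) is a linear
   program over the budget polytope whose dual supplies the variables tau and
   tau_0 of (D_Gamma).  Weak duality is a Lagrangian identity; strong duality
   comes from Farkas' lemma, proved by Fourier-Motzkin elimination.  Strong
   duality needs a feasible primal: for 0 <= Gamma <= N - 1 the analytic
   center with y = Gamma / (N - 1) is one, while for Gamma < 0 the budget set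
   is empty and (D_Gamma) is unbounded, so all three values are +oo. *)

From HB Require Import structures.
From mathcomp Require Import all_boot all_order all_algebra.
From mathcomp Require Import all_classical all_reals all_analysis.
From mathcomp Require Import ring lra.
Set Implicit Arguments.
Unset Strict Implicit.
Unset Printing Implicit Defensive.
Import Order.TTheory GRing.Theory Num.Theory.
Local Open Scope ring_scope.

Section LinearInequalities.
Variable R : realFieldType.

Lemma sumr_delta (J : finType) (j0 : J) (F : J -> R) :
  \sum_j (if j == j0 then 1 else 0) * F j = F j0.
Proof.
rewrite (bigD1 j0) //= eqxx mul1r big1 ?addr0 // => j /negPf ->; exact: mul0r.
Qed.

Lemma scalar_ineqs_solvable (J : finType) (a d : J -> R) :
  (forall j, a j = 0 -> 0 <= d j) ->
  (forall p q, 0 < a p -> a q < 0 -> 0 <= a p * d q - a q * d p) ->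
  exists x, forall j, a j * x <= d j.
Proof.
move=> Hzero Hpair.
have Hdiv j : a j != 0 -> a j * (d j / a j) = d j.
  by move=> nz; rewrite mulrC divfK.
have [/existsP[p0 Hp0]|noPos] := boolP [exists p, 0 < a p].
  have [p Hp Hmin] := arg_minP (P := fun p => 0 < a p) (fun p => d p / a p) Hp0.
  exists (d p / a p) => j; case: (ltrgt0P (a j)) => Haj.
  - by rewrite -(Hdiv j (lt0r_neq0 Haj)) ler_pM2l // Hmin.
  - rewrite -(ler_pM2l Hp) mulrCA Hdiv ?lt0r_neq0 //.
    by have := Hpair p j Hp Haj; lra.
  - by rewrite Haj mul0r Hzero.
exists (\sum_q `|d q / a q|) => j; case: (ltrgt0P (a j)) => Haj.
- by case/existsP: noPos; exists j.
- rewrite -(Hdiv j (ltr0_neq0 Haj)); apply: ler_wnM2l; first exact: ltW.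
  apply: le_trans (ler_norm _) _.
  by rewrite (bigD1 j) //= lerDl sumr_ge0.
- by rewrite Haj mul0r Hzero.
Qed.

Section FourierMotzkin.
Variables (J : finType) (a : J -> R).

(* One step of Fourier-Motzkin elimination: row [inl j] keeps row [j] when
   [a j = 0], row [inr (p, q)] with [a p > 0 > a q] is the combination of
   rows [p] and [q] in which the coefficient [a] cancels. *)
Definition fm_zero j : R := if a j == 0 then 1 else 0.
Definition fm_left p q : R := if (0 < a p) && (a q < 0) then - a q else 0.
Definition fm_right p q : R := if (0 < a p) && (a q < 0) then a p else 0.

Definition fm_comb (F : J -> R) (k : J + J * J) : R :=
  match k with
  | inl j => fm_zero j * F j
  | inr (p, q) => fm_left p q * F p + fm_right p q * F q
  end.

Definition fm_pullback (mu : J + J * J -> R) j : R :=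
  mu (inl j) * fm_zero j + \sum_q mu (inr (j, q)) * fm_left j q
  + \sum_p mu (inr (p, j)) * fm_right p j.

Lemma fm_pullback_ge0 mu : (forall k, 0 <= mu k) -> forall j, 0 <= fm_pullback mu j.
Proof.
move=> mu_ge0 j; have mu_ge0' k c : 0 <= c -> 0 <= mu k * c by apply: mulr_ge0.
rewrite /fm_pullback /fm_zero /fm_left /fm_right.
rewrite !addr_ge0 ?sumr_ge0 // => [|q _|p _]; apply: mu_ge0'; case: ifP => //.
- by case/andP=> _; rewrite oppr_ge0; apply: ltW.
- by case/andP=> /ltW.
Qed.

Lemma sum_fm_pullback mu F :
  \sum_j fm_pullback mu j * F j = \sum_k mu k * fm_comb F k.
Proof.
rewrite big_sumType /=.
have -> : \sum_(pq : J * J) mu (inr pq) * fm_comb F (inr pq) =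
  \sum_p \sum_q (mu (inr (p, q)) * fm_left p q * F p + mu (inr (p, q)) * fm_right p q * F q).
  by rewrite pair_bigA; apply: eq_bigr => -[p q] _ /=; ring.
under [X in _ = _ + X]eq_bigr do rewrite big_split /=.
rewrite big_split /= [X in _ = _ + (_ + X)]exchange_big /= -!big_split /=.
by apply: eq_bigr => j _; rewrite /fm_pullback !mulrDl !mulr_suml mulrA addrA.
Qed.

Lemma fm_comb_lin (I : finType) (F : I -> J -> R) (x : I -> R) k :
  \sum_i fm_comb (F i) k * x i = fm_comb (fun j => \sum_i F i j * x i) k.
Proof.
case: k => [j|[p q]] /=; rewrite ?mulr_sumr -?big_split /=;
  by apply: eq_bigr => i _; ring.
Qed.

Lemma fm_comb_eliminates k : fm_comb a k = 0.
Proof.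
case: k => [j|[p q]] /=; rewrite /fm_zero /fm_left /fm_right.
  by case: eqP => [->|]; rewrite ?mulr0 ?mul0r.
by case: ifP => _; [ring | rewrite !mul0r addr0].
Qed.

End FourierMotzkin.

Lemma farkas_ord n (J : finType) (A : J -> 'I_n -> R) (b : J -> R) :
  (exists x : 'I_n -> R, forall j, \sum_i A j i * x i <= b j) \/
  (exists mu : J -> R, (forall j, 0 <= mu j) /\
     (forall i, \sum_j mu j * A j i = 0) /\ \sum_j mu j * b j < 0).
Proof.
elim: n J A b => [|n IH] J A b.
  have [/existsP[j0 Hj0]|nb] := boolP [exists j, b j < 0].
    right; exists (fun j => if j == j0 then 1 else 0); split; first by move=> j; case: ifP.
    by split; [case | rewrite sumr_delta].
  left; exists (fun _ => 0) => j; rewrite big_ord0 leNgt.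
  by apply/negP => ?; case/existsP: nb; exists j.
pose a j := A j ord0; pose A' j i := A j (lift ord0 i).
have [[x' Hx']|[mu' [mu'_ge0 [mu'A mu'b]]]] :=
  IH _ (fun k i => fm_comb a (A'^~ i) k) (fm_comb a b).
  pose r j := \sum_i A' j i * x' i.
  have Hr k : fm_comb a r k <= fm_comb a b k by rewrite -fm_comb_lin.
  have [x0 Hx0] : exists x0, forall j, a j * x0 <= b j - r j.
    apply: scalar_ineqs_solvable => [j Haj|p q Hp Hq].
    + by have := Hr (inl j); rewrite /= /fm_zero Haj eqxx !mul1r; lra.
    + by have := Hr (inr (p, q)); rewrite /= /fm_left /fm_right Hp Hq /=; lra.
  left; exists (fun i => if unlift ord0 i is Some k then x' k else x0) => j.
  rewrite big_ord_recl /= unlift_none.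
  under eq_bigr do rewrite liftK.
  by rewrite -lerBrDr; exact: Hx0.
right; exists (fm_pullback a mu'); split; first exact: fm_pullback_ge0.
split; last by rewrite sum_fm_pullback.
move=> i; rewrite sum_fm_pullback; case: (unliftP ord0 i) => [i'|] ->.
  exact: mu'A.
by rewrite big1 // => k _; rewrite fm_comb_eliminates mulr0.
Qed.

Lemma farkas (V J : finType) (A : J -> V -> R) (b : J -> R) :
  (exists x : V -> R, forall j, \sum_v A j v * x v <= b j) \/
  (exists mu : J -> R, (forall j, 0 <= mu j) /\
     (forall v, \sum_j mu j * A j v = 0) /\ \sum_j mu j * b j < 0).
Proof.
have reindex_V (x : V -> R) j :
    \sum_v A j v * x v = \sum_(i < #|V|) A j (enum_val i) * x (enum_val i).
  by rewrite (reindex _ (onW_bij _ (enum_val_bij V))).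
have [[x Hx]|[mu [mu_ge0 [muA mub]]]] :=
  farkas_ord (fun j (i : 'I_#|V|) => A j (enum_val i)) b.
  left; exists (fun v => x (enum_rank v)) => j.
  by rewrite reindex_V; under eq_bigr do rewrite enum_valK; exact: Hx.
by right; exists mu; split=> //; split=> // v; rewrite -(enum_rankK v) muA.
Qed.

Definition affine (V : finType) (f : (V -> R) -> R) :=
  exists (a : V -> R) (a0 : R), forall x, f x = \sum_v a v * x v + a0.

Section AffineClosure.
Variable V : finType.
Implicit Types (f g : (V -> R) -> R) (k : R).

Lemma affine_cst k : affine (fun _ : V -> R => k).
Proof. by exists (fun _ => 0), k => x; rewrite big1 ?add0r // => v _; rewrite mul0r. Qed.

Lemma affine_coord (v0 : V) : affine (fun x => x v0).
Proof. by exists (fun v => if v == v0 then 1 else 0), 0 => x; rewrite sumr_delta addr0. Qed.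

Lemma affineD f g : affine f -> affine g -> affine (fun x => f x + g x).
Proof.
move=> [a [a0 Hf]] [b [b0 Hg]]; exists (fun v => a v + b v), (a0 + b0) => x.
under [in RHS]eq_bigr do rewrite mulrDl.
by rewrite Hf Hg big_split /=; ring.
Qed.

Lemma affineN f : affine f -> affine (fun x => - f x).
Proof.
move=> [a [a0 Hf]]; exists (fun v => - a v), (- a0) => x.
under [in RHS]eq_bigr do rewrite mulNr.
by rewrite Hf sumrN; ring.
Qed.

Lemma affineZ k f : affine f -> affine (fun x => k * f x).
Proof.
move=> [a [a0 Hf]]; exists (fun v => k * a v), (k * a0) => x.
by rewrite Hf mulrDr mulr_sumr; congr (_ + _); apply: eq_bigr => v _; rewrite mulrA.
Qed.

Lemma affineMr k f : affine f -> affine (fun x => f x * k).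
Proof.
move=> /(affineZ k) [a [a0 Hf]]; exists a, a0 => x; by rewrite -Hf mulrC.
Qed.

Lemma affine_sum (I : finType) (F : I -> (V -> R) -> R) :
  (forall i, affine (F i)) -> affine (fun x => \sum_i F i x).
Proof.
move=> /choice[a /choice[a0 HF]]; exists (fun v => \sum_i a i v), (\sum_i a0 i) => x.
under [in RHS]eq_bigr do rewrite mulr_suml.
by rewrite (eq_bigr _ (fun i _ => HF i x)) big_split /= exchange_big.
Qed.

End AffineClosure.

Lemma affine_alternative (V J : finType) (f : J -> (V -> R) -> R) :
  (forall j, affine (f j)) ->
  (exists x, forall j, f j x <= 0) \/
  (exists mu : J -> R, (forall j, 0 <= mu j) /\ forall x, \sum_j mu j * f j x = 1).
Proof.
move=> /choice[a /choice[a0 Hf]].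
have [[x Hx]|[mu [mu_ge0 [muA mub]]]] := farkas a (fun j => - a0 j).
  by left; exists x => j; rewrite Hf; have := Hx j; lra.
pose s := \sum_j mu j * a0 j.
have s_gt0 : 0 < s.
  by move: mub; under eq_bigr do rewrite mulrN; rewrite sumrN oppr_lt0.
right; exists (fun j => mu j / s); split.
  by move=> j; rewrite divr_ge0 // ltW.
move=> x; under eq_bigr do rewrite mulrAC.
rewrite -mulr_suml -[X in _ = X](divff (lt0r_neq0 s_gt0)); congr (_ / _).
under eq_bigr do rewrite Hf mulrDr mulr_sumr.
rewrite big_split /= exchange_big /= big1 ?add0r // => v _.
by under eq_bigr do rewrite mulrA; rewrite -mulr_suml muA mul0r.
Qed.

(* Linear programming strong duality, stated with a constant Lagrangian. *)
Lemma affine_duality (V J : finType) (f : J -> (V -> R) -> R) (g : (V -> R) -> R) t :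
  (forall j, affine (f j)) -> affine g ->
  (exists x0, forall j, f j x0 <= 0) ->
  (forall x, (forall j, f j x <= 0) -> t < g x) ->
  exists2 mu : J -> R, forall j, 0 <= mu j &
    exists2 s, t < s & forall x, g x + \sum_j mu j * f j x = s.
Proof.
move=> f_aff g_aff [x0 Hx0] Ht.
pose f' (k : 'I_1 + J) := if k is inr j then f j else fun x => g x - t.
have f'_aff k : affine (f' k).
  by case: k => [_|j] /=; [apply: affineD => //; apply: affine_cst | apply: f_aff].
have [[x Hx]|[mu [mu_ge0 Hmu]]] := affine_alternative f'_aff.
  by have := Hx (inl ord0); have := Ht x (fun j => Hx (inr j)) => /=; lra.
have {}Hmu x : mu (inl ord0) * (g x - t) + \sum_j mu (inr j) * f j x = 1.
  by rewrite -(Hmu x) big_sumType big_ord1.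
pose m0 := mu (inl ord0).
have m0_gt0 : 0 < m0.
  rewrite lt_def mu_ge0 andbT; apply/eqP => m0_eq0.
  have : \sum_j mu (inr j) * f j x0 <= 0.
    by apply: sumr_le0 => j _; apply: mulr_ge0_le0.
  by have := Hmu x0; rewrite -/m0 m0_eq0 mul0r add0r; lra.
exists (fun j => mu (inr j) / m0) => [j|]; first by rewrite divr_ge0 // ltW.
exists (t + m0^-1) => [|x]; first by rewrite ltrDl invr_gt0.
under eq_bigr do rewrite mulrAC.
rewrite -mulr_suml.
have -> : \sum_j mu (inr j) * f j x = 1 - m0 * (g x - t) by have := Hmu x; rewrite -/m0; lra.
by field; rewrite lt0r_neq0.
Qed.

Lemma affine_identity_coef (I : finType) (E : I -> R) (C s : R) :
  (forall u : I -> R, \sum_i u i * E i + C = s) -> (forall i, E i = 0) /\ C = s.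
Proof.
move=> H; have C_eq : C = s by rewrite -(H (fun _ => 0)) big1 ?add0r // => i _; rewrite mul0r.
by split=> // i; have := H (fun j => if j == i then 1 else 0); rewrite sumr_delta; lra.
Qed.

End LinearInequalities.

Ltac affine_tac := repeat first
  [ apply: affine_cst | apply: affine_coord | apply: affine_sum => ?
  | apply: affineD | apply: affineN | apply: affineZ | apply: affineMr ].

Lemma lee_fin_approx (R : realType) (a b : \bar R) :
  (forall t : R, (t%:E < a)%E -> (t%:E <= b)%E) -> (a <= b)%E.
Proof.
case: a => [a| |] H; last by rewrite leNye.
- case: b H => [b| |] H; last 2 first.
  + by rewrite leey.
  + by have := H (a - 1); rewrite lte_fin ltrBlDr ltrDl ltr01 leeNy_eq => /(_ isT).
  rewrite lee_fin leNgt; apply/negP => ba.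
  by have := H ((a + b) / 2); rewrite !lte_fin !lee_fin; have := midf_lt ba; lra.
- case: b H => [b| |] H //.
  + by have := H (b + 1); rewrite ltry lee_fin => /(_ isT) ?; exfalso; lra.
  + by have := H 0; rewrite ltry leeNy_eq => /(_ isT).
Qed.

Section Budget.
Variables (R : realType) (k : nat) (Gamma : R).

Definition budget_cons (j : ('I_k + 'I_k) + bool) (y : 'I_k -> R) : R :=
  match j with
  | inl (inl i) => y i - 1
  | inl (inr i) => - y i
  | inr true => \sum_i y i - Gamma
  | inr false => Gamma - \sum_i y i
  end.

Lemma budget_cons_affine j : affine (budget_cons j).
Proof. by case: j => [[i|i]|[]] /=; affine_tac. Qed.

Lemma budget_consP y : (forall j, budget_cons j y <= 0) <-> budget Gamma y.
Proof.
split=> [H|[y01 sum_y] [[i|i]|[]] /=]; rewrite ?sum_y ?subrr //.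
  split=> [i|]; last by have := H (inr true); have := H (inr false) => /=; lra.
  by have := H (inl (inl i)); have := H (inl (inr i)) => /= h1 h2; apply/andP; split; lra.
all: by have /andP[] := y01 i; lra.
Qed.

Lemma budget_const :
  (0 < k)%N -> 0 <= Gamma <= k%:R -> budget Gamma (fun _ : 'I_k => Gamma / k%:R).
Proof.
move=> k_gt0 /andP[Gamma_ge0 Gamma_le]; have k_gt0' : 0 < k%:R :> R by rewrite ltr0n.
split=> [i|]; first by rewrite divr_ge0 ?ler_pdivrMr ?mul1r // ltW.
by rewrite sumr_const card_ord -(mulr_natr (Gamma / _)) divfK ?lt0r_neq0.
Qed.

Lemma budget_weak_duality (a y tau : 'I_k -> R) tau0 :
  budget Gamma y -> (forall i, 0 <= tau i) -> (forall i, 0 <= a i + tau i + tau0) ->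
  - \sum_i tau i - tau0 * Gamma <= \sum_i y i * a i.
Proof.
move=> [y01 sum_y] tau_ge0 Ha.
have : 0 <= \sum_i (y i * (a i + tau i + tau0) + tau i * (1 - y i)).
  apply: sumr_ge0 => i _; have /andP[y_ge0 y_le1] := y01 i.
  by rewrite addr_ge0 ?mulr_ge0 ?subr_ge0.
have -> : \sum_i (y i * (a i + tau i + tau0) + tau i * (1 - y i)) =
          \sum_i (y i * a i + tau i + tau0 * y i) by apply: eq_bigr => i _; ring.
by rewrite !big_split /= -mulr_sumr sum_y; lra.
Qed.

Lemma budget_strong_duality (a : 'I_k -> R) t :
  (exists y0 : 'I_k -> R, budget Gamma y0) ->
  (forall y, budget Gamma y -> t < \sum_i y i * a i) ->
  exists tau tau0, [/\ forall i, 0 <= tau i, forall i, 0 <= a i + tau i + tau0 &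
                       t < - \sum_i tau i - tau0 * Gamma].
Proof.
move=> [y0 feas0] Ht.
have [|||mu mu_ge0 [s t_lt_s Hs]] :=
  @affine_duality R _ _ budget_cons (fun y => \sum_i y i * a i) t budget_cons_affine.
- by affine_tac.
- by exists y0; apply/budget_consP.
- by move=> y /budget_consP; apply: Ht.
pose tau i := mu (inl (inl i)).
pose rho i := mu (inl (inr i)).
pose tau0 := mu (inr true) - mu (inr false).
have L y : \sum_i y i * (a i + tau i - rho i + tau0) + (- \sum_i tau i - tau0 * Gamma) = s.
  rewrite -(Hs y) !big_sumType !big_bool /=.
  have -> : \sum_i y i * (a i + tau i - rho i + tau0) =
     \sum_i (y i * a i + (tau i * (y i - 1) + tau i) + rho i * - y i + tau0 * y i).
    by apply: eq_bigr => i _; ring.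
  by rewrite !big_split /= -mulr_sumr /tau /rho /tau0; ring.
have [slack s_eq] := affine_identity_coef L.
exists tau, tau0; split=> [i|i|]; [exact: mu_ge0 | | by rewrite s_eq].
by have := slack i; have := mu_ge0 (inl (inr i)); rewrite -/(rho i); lra.
Qed.

End Budget.

Section Duality.
Variable R : realType.
Variables (N M : nat) (h : 'I_M -> R) (Dl : 'I_M -> 'I_N.-1 -> R).
Variables (gbar cR vl vu : 'I_N.-1 -> R) (Gamma : R).

Definition D_obj (eta tau : 'I_N.-1 -> R) (tau0 : R) (theta : 'I_M -> R) : R :=
  dot cR gbar - dot eta cR - \sum_(i < N.-1) tau i - tau0 * Gamma
  + \sum_(m < M) theta m * h m * dot cR (Dl m).

Definition D_feasible (lamL lamU eta tau : 'I_N.-1 -> R) (beta tau0 : R)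
    (theta : 'I_M -> R) :=
  [/\ eq_constr h Dl gbar lamL lamU beta eta theta,
      (forall i, - (lamL i * vl i) - lamU i * vu i + tau i + tau0 >= 0),
      (forall i, 0 <= lamL i) /\ (forall i, 0 <= lamU i) &
      (forall i, 0 <= eta i) /\ (forall m, 0 <= theta m) /\ (forall i, 0 <= tau i)].

Definition P_feasible (w y : 'I_N.-1 -> R) :=
  [/\ Vhat h Dl w, (forall i, - (y i * vl i) <= w i - cR i <= y i * vu i) &
      budget Gamma y].

Lemma D_obj_le_val_D lamL lamU eta tau beta tau0 theta :
  D_feasible lamL lamU eta tau beta tau0 theta ->
  ((D_obj eta tau tau0 theta)%:E <= val_D h Dl gbar cR vl vu Gamma)%E.
Proof.
by move=> [H1 H2 H3 H4]; apply: ereal_sup_ubound; exists lamL, lamU, eta, tau, beta, tau0, theta.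
Qed.

(* Witness: eta = gbar cancels the gbar terms, and a large tau0 makes
   [- tau0 * Gamma] arbitrarily large. *)
Lemma val_D_pinfty : Gamma < 0 -> (forall i, 0 <= gbar i) ->
  val_D h Dl gbar cR vl vu Gamma = +oo%E.
Proof.
move=> Gamma_lt0 gbar_ge0; apply: eq_infty => r.
pose tau0 := `|r| / - Gamma.
have tau0_ge0 : 0 <= tau0 by rewrite divr_ge0 // oppr_ge0 ltW.
have feas : D_feasible (fun _ => 0) (fun _ => 0) gbar (fun _ => 0) 0 tau0 (fun _ => 0).
  split => [i /=||//|].
  - by rewrite big1 => [|m _]; rewrite ?mul0r; lra.
  - by move=> i; rewrite !mul0r; lra.
  - by do !split.
apply: le_trans (D_obj_le_val_D feas); rewrite lee_fin /D_obj.
have -> : dot gbar cR = dot cR gbar by apply: eq_bigr => i _; rewrite mulrC.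
rewrite big1_eq [X in _ + X]big1 => [|m _]; last by rewrite !mul0r.
have -> : tau0 * Gamma = - `|r| by rewrite /tau0; field; rewrite lt_eqF.
by rewrite subrr sub0r opprK; have := ler_norm r; lra.
Qed.

Section Lagrangian.
Hypothesis sum_cR : \sum_i cR i = 1.

(* The Lagrangian of (P_Gamma) regrouped by [w - cR] and [y]: their
   coefficients are the constraints of (D_Gamma). *)
Lemma P_lagrangianE (w y eta lamL lamU tau rho : 'I_N.-1 -> R) (beta tau0 : R)
    (theta : 'I_M -> R) :
  dot w gbar + (\sum_i eta i * - w i + \sum_i lamL i * (- (w i - cR i) - y i * vl i)
   + \sum_i lamU i * ((w i - cR i) - y i * vu i) + \sum_i tau i * (y i - 1)
   + \sum_i rho i * - y i + beta * (\sum_i w i - 1) + tau0 * (\sum_i y i - Gamma)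
   + \sum_m theta m * (h m * dot w (Dl m)))
  = \sum_i (w i - cR i) * (gbar i - lamL i + lamU i + beta - eta i
                             + \sum_m theta m * h m * Dl m i)
    + \sum_i y i * (- (lamL i * vl i) - lamU i * vu i + tau i + tau0 - rho i)
    + D_obj eta tau tau0 theta.
Proof.
have exchange (u : 'I_N.-1 -> R) : \sum_m theta m * (h m * dot u (Dl m)) =
    \sum_i u i * \sum_m theta m * h m * Dl m i.
  rewrite /dot; under eq_bigr do rewrite !mulr_sumr.
  by rewrite exchange_big; apply: eq_bigr => i _; rewrite mulr_sumr; apply: eq_bigr => m _; ring.
have beta_sum : beta * (\sum_i w i - 1) = \sum_i beta * (w i - cR i).
  by rewrite -mulr_sumr sumrB sum_cR.
have tau0_sum : tau0 * (\sum_i y i - Gamma) = \sum_i tau0 * y i - tau0 * Gamma.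
  by rewrite mulrBr mulr_sumr.
have cR_sum : \sum_m theta m * h m * dot cR (Dl m) = \sum_m theta m * (h m * dot cR (Dl m)).
  by apply: eq_bigr => m _; rewrite mulrA.
rewrite /D_obj cR_sum !exchange beta_sum tau0_sum /dot.
have pointwise : \sum_i (w i * gbar i + eta i * - w i + lamL i * (- (w i - cR i) - y i * vl i)
   + lamU i * ((w i - cR i) - y i * vu i) + tau i * (y i - 1) + rho i * - y i
   + beta * (w i - cR i) + tau0 * y i + w i * \sum_m theta m * h m * Dl m i)
  = \sum_i ((w i - cR i) * (gbar i - lamL i + lamU i + beta - eta i
                             + \sum_m theta m * h m * Dl m i)
    + y i * (- (lamL i * vl i) - lamU i * vu i + tau i + tau0 - rho i)
    + cR i * gbar i - eta i * cR i - tau i + cR i * \sum_m theta m * h m * Dl m i).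
  by apply: eq_bigr => i _; ring.
rewrite !big_split /= !sumrN in pointwise.
lra.
Qed.

Lemma P_weak_duality w y lamL lamU eta tau beta tau0 theta :
  P_feasible w y -> D_feasible lamL lamU eta tau beta tau0 theta ->
  D_obj eta tau tau0 theta <= dot w gbar.
Proof.
move=> [[w_ge0 [sum_w Hm]] Hb [y01 sum_y]] [HE HF [lamL_ge0 lamU_ge0] [eta_ge0 [theta_ge0 tau_ge0]]].
pose rho i := - (lamL i * vl i) - lamU i * vu i + tau i + tau0.
have := P_lagrangianE w y eta lamL lamU tau rho beta tau0 theta.
rewrite [X in _ = X + _ + _]big1 => [|i _]; last by rewrite HE mulr0.
rewrite [X in _ = _ + X + _]big1 => [|i _]; last by rewrite /rho subrr mulr0.
rewrite sum_w sum_y !subrr !mulr0 !addr0 add0r => <-.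
have nonpos (c u : 'I_N.-1 -> R) : (forall i, 0 <= c i) -> (forall i, u i <= 0) ->
    \sum_i c i * u i <= 0.
  by move=> c_ge0 u_le0; apply: sumr_le0 => i _; apply: mulr_ge0_le0.
have a1 : \sum_i eta i * - w i <= 0 by apply: nonpos => // i; rewrite oppr_le0.
have a2 : \sum_i lamL i * (- (w i - cR i) - y i * vl i) <= 0.
  by apply: nonpos => // i; have /andP[] := Hb i; lra.
have a3 : \sum_i lamU i * ((w i - cR i) - y i * vu i) <= 0.
  by apply: nonpos => // i; have /andP[] := Hb i; lra.
have a4 : \sum_i tau i * (y i - 1) <= 0.
  by apply: nonpos => // i; have /andP[] := y01 i; lra.
have a5 : \sum_i rho i * - y i <= 0.
  by apply: nonpos => // i; have /andP[] := y01 i; lra.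
have a6 : \sum_m theta m * (h m * dot w (Dl m)) <= 0.
  by apply: sumr_le0 => m _; apply: mulr_ge0_le0.
lra.
Qed.

(* (P_Gamma) as a system [P_cons j x <= 0] in [x = (w, y)], with [x (inl i) = w i]
   and [x (inr i) = y i]; each equality is split into two inequalities. *)
Definition P_index := ((((('I_N.-1 + 'I_N.-1) + 'I_N.-1) + 'I_N.-1) + 'I_N.-1)
                       + ((bool + bool) + 'I_M))%type.

Definition P_cons (j : P_index) (x : 'I_N.-1 + 'I_N.-1 -> R) : R :=
  match j with
  | inl (inl (inl (inl (inl i)))) => - x (inl i)
  | inl (inl (inl (inl (inr i)))) => - (x (inl i) - cR i) - x (inr i) * vl i
  | inl (inl (inl (inr i))) => (x (inl i) - cR i) - x (inr i) * vu i
  | inl (inl (inr i)) => x (inr i) - 1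
  | inl (inr i) => - x (inr i)
  | inr (inl (inl true)) => \sum_i x (inl i) - 1
  | inr (inl (inl false)) => 1 - \sum_i x (inl i)
  | inr (inl (inr true)) => \sum_i x (inr i) - Gamma
  | inr (inl (inr false)) => Gamma - \sum_i x (inr i)
  | inr (inr m) => h m * dot (fun i => x (inl i)) (Dl m)
  end.

Lemma P_cons_affine j : affine (P_cons j).
Proof. by case: j => [[[[[i|i]|i]|i]|i]|[[[]|[]]|m]] /=; rewrite ?/dot; affine_tac. Qed.

Lemma P_consP x :
  (forall j, P_cons j x <= 0) <-> P_feasible (fun i => x (inl i)) (fun i => x (inr i)).
Proof.
split=> [H|[[w_ge0 [sum_w Hm]] Hb [y01 sum_y]]].
  split; [split; [|split] | | split].
  - by move=> i; have := H (inl (inl (inl (inl (inl i))))) => /=; lra.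
  - by have := H (inr (inl (inl true))); have := H (inr (inl (inl false))) => /=; lra.
  - by move=> m; have := H (inr (inr m)).
  - move=> i; have := H (inl (inl (inl (inl (inr i))))); have := H (inl (inl (inl (inr i)))).
    by move=> /= h1 h2; apply/andP; split; lra.
  - move=> i; have := H (inl (inl (inr i))); have := H (inl (inr i)).
    by move=> /= h1 h2; apply/andP; split; lra.
  - by have := H (inr (inl (inr true))); have := H (inr (inl (inr false))) => /=; lra.
case=> [[[[[i|i]|i]|i]|i]|[[[]|[]]|m]] /=; rewrite ?sum_w ?sum_y ?subrr //.
- by have := w_ge0 i; lra.
- by have /andP[] := Hb i; lra.
- by have /andP[] := Hb i; lra.
- by have /andP[] := y01 i; lra.
- by have /andP[] := y01 i; lra.
Qed.

Lemma sum_P_cons (mu : P_index -> R) x :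
  \sum_j mu j * P_cons j x =
   \sum_i mu (inl (inl (inl (inl (inl i))))) * - x (inl i)
   + \sum_i mu (inl (inl (inl (inl (inr i))))) * (- (x (inl i) - cR i) - x (inr i) * vl i)
   + \sum_i mu (inl (inl (inl (inr i)))) * ((x (inl i) - cR i) - x (inr i) * vu i)
   + \sum_i mu (inl (inl (inr i))) * (x (inr i) - 1)
   + \sum_i mu (inl (inr i)) * - x (inr i)
   + (mu (inr (inl (inl true))) - mu (inr (inl (inl false)))) * (\sum_i x (inl i) - 1)
   + (mu (inr (inl (inr true))) - mu (inr (inl (inr false)))) * (\sum_i x (inr i) - Gamma)
   + \sum_m mu (inr (inr m)) * (h m * dot (fun i => x (inl i)) (Dl m)).
Proof. by rewrite !big_sumType !big_bool /=; ring. Qed.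

Lemma P_strong_duality t :
  (exists w y, P_feasible w y) ->
  (forall w y, P_feasible w y -> t < dot w gbar) ->
  exists lamL lamU eta tau beta tau0 theta,
    D_feasible lamL lamU eta tau beta tau0 theta /\ t < D_obj eta tau tau0 theta.
Proof.
move=> [w0 [y0 feas0]] Ht.
have [|||mu mu_ge0 [s t_lt_s Hs]] :=
  @affine_duality R _ _ P_cons (fun x => dot (fun i => x (inl i)) gbar) t P_cons_affine.
- by rewrite /dot; affine_tac.
- by exists (fun x => match x with inl i => w0 i | inr i => y0 i end); apply/P_consP.
- by move=> x /P_consP; apply: Ht.
pose eta i := mu (inl (inl (inl (inl (inl i))))).
pose lamL i := mu (inl (inl (inl (inl (inr i))))).
pose lamU i := mu (inl (inl (inl (inr i)))).
pose tau i := mu (inl (inl (inr i))).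
pose rho i := mu (inl (inr i)).
pose beta := mu (inr (inl (inl true))) - mu (inr (inl (inl false))).
pose tau0 := mu (inr (inl (inr true))) - mu (inr (inl (inr false))).
pose theta m := mu (inr (inr m)).
have L x : \sum_i (x (inl i) - cR i) * (gbar i - lamL i + lamU i + beta - eta i
                                       + \sum_m theta m * h m * Dl m i)
    + \sum_i x (inr i) * (- (lamL i * vl i) - lamU i * vu i + tau i + tau0 - rho i)
    + D_obj eta tau tau0 theta = s.
  by rewrite -(Hs x) sum_P_cons P_lagrangianE.
have [stationary D_obj_s] : (forall i, gbar i - lamL i + lamU i + beta - eta i
                                       + \sum_m theta m * h m * Dl m i = 0) /\
                            D_obj eta tau tau0 theta = s.
  apply: affine_identity_coef => u.
  have := L (fun x => if x is inl i then cR i + u i else 0) => /=.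
  rewrite [X in _ + X + _ = _ -> _]big1 => [|i _]; last by rewrite mul0r.
  by rewrite addr0 => <-; congr (_ + _); apply: eq_bigr => i _; congr (_ * _); ring.
have [slack _] : (forall i, - (lamL i * vl i) - lamU i * vu i + tau i + tau0 - rho i = 0) /\
                 D_obj eta tau tau0 theta = s.
  apply: affine_identity_coef => u.
  have := L (fun x => match x with inl i => cR i | inr i => u i end) => /=.
  by rewrite big1 ?add0r // => i _; rewrite subrr mul0r.
exists lamL, lamU, eta, tau, beta, tau0, theta; split; last by rewrite D_obj_s.
split => //.
- by move=> i; have := slack i; have := mu_ge0 (inl (inr i)); rewrite -/(rho i); lra.
- by split => i; apply: mu_ge0.
- by split; [|split] => i; apply: mu_ge0.
Qed.

Lemma val_P_eq_val_D :
  (forall i, 0 <= gbar i) -> (0 <= Gamma -> exists w y, P_feasible w y) ->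
  val_P h Dl gbar cR vl vu Gamma = val_D h Dl gbar cR vl vu Gamma.
Proof.
move=> gbar_ge0 P_feas; apply/eqP; rewrite eq_le; apply/andP; split.
  apply: lee_fin_approx => t Ht.
  have [Gamma_lt0|Gamma_ge0] := ltP Gamma 0; first by rewrite val_D_pinfty ?leey.
  have t_lt_P w y : P_feasible w y -> t < dot w gbar.
    move=> [Vw Hb By]; rewrite -lte_fin; apply: lt_le_trans Ht _.
    by apply: ereal_inf_lbound; exists w, y.
  have [lamL [lamU [eta [tau [beta [tau0 [theta [feas t_lt]]]]]]]] :=
    P_strong_duality (P_feas Gamma_ge0) t_lt_P.
  by apply: le_trans (D_obj_le_val_D feas); rewrite lee_fin ltW.
apply: ge_ereal_sup => _ [lamL [lamU [eta [tau [beta [tau0 [theta [H1 H2 H3 H4 ->]]]]]]]].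
apply: le_ereal_inf_tmp => _ [w [y [Vw Hb By ->]]].
by rewrite lee_fin (P_weak_duality (And3 Vw Hb By) (And4 H1 H2 H3 H4)).
Qed.

End Lagrangian.

Lemma L_obj_le_val_D lamL lamU beta eta theta :
  (forall i, 0 <= gbar i) -> (0 <= Gamma -> exists y : 'I_N.-1 -> R, budget Gamma y) ->
  eq_constr h Dl gbar lamL lamU beta eta theta ->
  (forall i, 0 <= lamL i) -> (forall i, 0 <= lamU i) ->
  (forall i, 0 <= eta i) -> (forall m, 0 <= theta m) ->
  ((I2 h Dl gbar cR eta theta)%:E + I1 lamL lamU vl vu Gamma <=
   val_D h Dl gbar cR vl vu Gamma)%E.
Proof.
move=> gbar_ge0 budget_feas HE lamL_ge0 lamU_ge0 eta_ge0 theta_ge0.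
apply: lee_fin_approx => t Ht.
have [Gamma_lt0|Gamma_ge0] := ltP Gamma 0; first by rewrite val_D_pinfty ?leey.
pose I2v := I2 h Dl gbar cR eta theta.
have t_lt_I1 : ((t - I2v)%:E < I1 lamL lamU vl vu Gamma)%E.
  move: Ht; rewrite -/I2v; case: (I1 lamL lamU vl vu Gamma) => [x| |] //=.
  - by rewrite -EFinD !lte_fin; lra.
  - by move=> _; exact: ltry.
have t_lt_budget y : budget Gamma y ->
    t - I2v < \sum_i y i * - (lamL i * vl i + lamU i * vu i).
  move=> By; rewrite -lte_fin; apply: lt_le_trans t_lt_I1 _.
  by apply: ereal_inf_lbound; exists y.
have [tau [tau0 [tau_ge0 slack t_lt]]] :=
  budget_strong_duality (budget_feas Gamma_ge0) t_lt_budget.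
have feas : D_feasible lamL lamU eta tau beta tau0 theta.
  by split=> // i; have := slack i; lra.
apply: le_trans (D_obj_le_val_D feas); rewrite lee_fin.
by move: t_lt; rewrite /I2v /I2 /D_obj; lra.
Qed.

Lemma D_obj_le_val_L lamL lamU eta tau beta tau0 theta :
  D_feasible lamL lamU eta tau beta tau0 theta ->
  ((D_obj eta tau tau0 theta)%:E <= val_L h Dl gbar cR vl vu Gamma)%E.
Proof.
move=> [HE slack lamLU_ge0 [eta_ge0 [theta_ge0 tau_ge0]]].
apply: le_trans (ereal_sup_ubound _); last first.
  by exists lamL, lamU, beta, eta, theta; split.
have -> : D_obj eta tau tau0 theta = I2 h Dl gbar cR eta theta + (- \sum_i tau i - tau0 * Gamma).
  by rewrite /D_obj /I2; ring.
rewrite EFinD leeD2l //; apply: le_ereal_inf_tmp => _ [y By <-]; rewrite lee_fin.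
by apply: budget_weak_duality => // i; have := slack i; lra.
Qed.

Lemma val_L_eq_val_D :
  (forall i, 0 <= gbar i) -> (0 <= Gamma -> exists y : 'I_N.-1 -> R, budget Gamma y) ->
  val_L h Dl gbar cR vl vu Gamma = val_D h Dl gbar cR vl vu Gamma.
Proof.
move=> gbar_ge0 budget_feas; apply/eqP; rewrite eq_le; apply/andP; split.
  apply: ge_ereal_sup => _ [lamL [lamU [beta [eta [theta [HE [lamL_ge0 lamU_ge0] [eta_ge0 theta_ge0] ->]]]]]].
  exact: L_obj_le_val_D.
apply: ge_ereal_sup => _ [lamL [lamU [eta [tau [beta [tau0 [theta [H1 H2 H3 H4 ->]]]]]]]].
exact: D_obj_le_val_L (And4 H1 H2 H3 H4).
Qed.

End Duality.

Lemma gfun_ge0 (R : realType) (N : nat) (xs : nat -> R) x j : 0 <= @gfun R N xs x j.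
Proof.
rewrite /gfun; case: (leP x (xs j)) => // x_gt; case: (leP (xs j.+1) x) => // x_lt.
by rewrite divr_ge0 // subr_ge0 ltW // (lt_trans x_gt).
Qed.

Lemma sum_Rmap (R : realType) (N : nat) (v : 'I_N.-2 -> R) :
  (1 < N)%N -> \sum_(i < N.-1) Rmap v i = 1.
Proof.
case: N v => [|[|n]] // v _ /=; rewrite big_ord_recr /=.
have Rmap_widen (i : 'I_n) : Rmap v (widen_ord (leqnSn _) i) = v i.
  rewrite /Rmap; case: insubP => [u _ u_eq|]; last by rewrite /= ltn_ord.
  by congr v; apply: val_inj.
under eq_bigr do rewrite Rmap_widen.
by rewrite /Rmap insubN /= ?ltnn // addrC subrK.
Qed.

Section AnalyticCenter.
Variables (R : realType) (N M : nat) (h : 'I_M -> R) (Dl : 'I_M -> 'I_N.-1 -> R).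
Variable c : 'I_N.-2 -> R.
Hypothesis Vc : Vset h Dl c.

Lemma Rmap_Vset_bounds v : Vset h Dl v -> forall i, 0 <= Rmap v i <= 1.
Proof.
move=> [v_ge0 [sum_v_le1 _]] i; rewrite /Rmap; case: insubP => [u _ _|_] /=.
  by rewrite v_ge0 (le_trans _ sum_v_le1) // (bigD1 u) //= lerDl sumr_ge0.
by rewrite subr_ge0 sum_v_le1 lerBlDr lerDl sumr_ge0.
Qed.

Lemma vlow_ge0 i : 0 <= vlow h Dl (Rmap c) i.
Proof.
rewrite /vlow oppr_ge0; apply: ge_inf; last by exists c; rewrite ?subrr.
exists (- Rmap c i) => _ [v Vv <-].
by have /andP[v_ge0 _] := Rmap_Vset_bounds Vv i; lra.
Qed.

Lemma vup_ge0 i : 0 <= vup h Dl (Rmap c) i.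
Proof.
rewrite /vup; apply: ub_le_sup; last by exists c; rewrite ?subrr.
exists (1 - Rmap c i) => _ [v Vv <-].
by have /andP[_ v_le1] := Rmap_Vset_bounds Vv i; lra.
Qed.

Lemma center_P_feasible Gamma : (1 < N)%N -> 0 <= Gamma <= (N.-1)%:R ->
  P_feasible h Dl (Rmap c) (vlow h Dl (Rmap c)) (vup h Dl (Rmap c)) Gamma
    (Rmap c) (fun _ => Gamma / (N.-1)%:R).
Proof.
move=> N_gt1 Gamma_range; have [_ [_ Hm]] := Vc.
have N1_gt0 : (0 < N.-1)%N by rewrite -subn1 subn_gt0.
have /andP[Gamma_ge0 _] := Gamma_range.
split; last exact: budget_const N1_gt0 Gamma_range.
- split=> [i|]; first by case/andP: (Rmap_Vset_bounds Vc i).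
  by split; [exact: sum_Rmap | exact: Hm].
- by move=> i; rewrite subrr oppr_le0 !mulr_ge0 ?vlow_ge0 ?vup_ge0.
Qed.

End AnalyticCenter.

Unset Implicit Arguments.

Theorem theorem2 (R : realType) (N n K M : nat) (xs : nat -> R)
  (z : 'I_n -> R) (xi : 'I_K -> 'I_n -> R)
  (r1 r2 r3 p h : 'I_M -> R) (c : 'I_N.-2 -> R) (Gamma : R) :
  (3 <= N)%N ->
  (forall i j : nat, (i < j < N)%N -> xs i < xs j) ->
  (0 < K)%N ->
  (forall k, xs 0%N <= dot z (xi k) <= xs N.-1) ->
  (0 < M)%N ->
  (forall m, [/\ r1 m <= r3 m, xs 0%N <= r1 m <= xs N.-1,
                 xs 0%N <= r2 m <= xs N.-1 & xs 0%N <= r3 m <= xs N.-1]) ->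
  (forall m, 0 <= p m <= 1) ->
  (forall m, h m = 1 \/ h m = -1) ->
  let Dl : 'I_M -> 'I_N.-1 -> R :=
    fun m => @Delta R N xs (p m) (r1 m) (r2 m) (r3 m) in
  let gbar : 'I_N.-1 -> R :=
    fun j => K%:R^-1 * \sum_(k < K) @gfun R N xs (dot z (xi k)) j in
  (exists v, interior_pt (Vset h Dl) v) ->
  analytic_center h Dl c ->
  let cR := Rmap c in
  let vl := vlow h Dl cR in
  let vu := vup h Dl cR in
  Gamma <= (N.-1)%:R ->
  val_P h Dl gbar cR vl vu Gamma = val_D h Dl gbar cR vl vu Gamma /\
  val_L h Dl gbar cR vl vu Gamma = val_D h Dl gbar cR vl vu Gamma.
Proof.
move=> N_ge3 _ _ _ _ _ _ _ Dl gbar _ [[e e_gt0 c_int] _] cR vl vu Gamma_le.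
have Vc : Vset h Dl c by apply: c_int => i; rewrite subrr normr0.
have N_gt1 : (1 < N)%N by apply: leq_trans N_ge3.
have gbar_ge0 i : 0 <= gbar i.
  by rewrite mulr_ge0 ?invr_ge0 ?sumr_ge0 // => k _; apply: gfun_ge0.
have P_feas (Gamma_ge0 : 0 <= Gamma) : exists w y, P_feasible h Dl cR vl vu Gamma w y.
  by do 2 eexists; apply: center_P_feasible; rewrite ?Gamma_ge0.
split; first exact: val_P_eq_val_D (sum_Rmap c N_gt1) gbar_ge0 P_feas.
apply: val_L_eq_val_D gbar_ge0 _ => Gamma_ge0.
by have [w [y [_ _ By]]] := P_feas Gamma_ge0; exists y.
Qed.
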